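(* Let $N\ge 0$ be an integer and let $a,b,c,z$ be complex numbers (or indeterminates) with $z\neq 0$, such that all denominators below are nonzero. Then \[ {}_{2}F_{1}^{[N]}\left(\begin{matrix}a,b\\ c\end{matrix};z\right) =\frac{(a)_{N} (c-a)_{N}}{(c)_{N}\, N!} \sum_{n=0}^{N}\frac{(1+n)_{N-n}}{(a+n)_{N-n}}\,\frac{(1+N-n)_{n}}{(c-a+N-n)_{n}}\, \frac{(b+Nz^{-1}-n)_{n}}{(Nz^{-1}-n)_{n}}. \]
   Context: For a number $x$ and an integer $m\ge 0$, $(x)_m=x(x+1)\cdots(x+m-1)$ denotes the rising factorial, with $(x)_0=1$. For an integer $N\ge 0$ the truncated hypergeometric function is defined by \[ {}_{2}F_{1}^{[N]}\left(\begin{matrix}a,b\\ c\end{matrix};z\right)=\sum_{m=0}^{N}\frac{(a)_m(b)_m}{(c)_m\, m!}\,\frac{(N+1-m)_m}{(Nz^{-1}-m)_m}. \] *)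

From HB Require Import structures.
From mathcomp Require Import all_boot all_order all_algebra.
Set Implicit Arguments. Unset Strict Implicit. Unset Printing Implicit Defensive.
Import Order.TTheory GRing.Theory Num.Theory.
Local Open Scope ring_scope.

Definition rfact {C : numClosedFieldType} (x : C) (m : nat) : C :=
  \prod_(i < m) (x + i%:R).

Definition F21trunc {C : numClosedFieldType} (N : nat) (a b c z : C) : C :=
  \sum_(m < N.+1)
    (rfact a m * rfact b m) / (rfact c m * (m`!)%:R)
    * (rfact ((N.+1 - m)%:R) m / rfact (N%:R / z - m%:R) m).

From mathcomp Require Import all_boot all_algebra.
From mathcomp Require Import ring.
Import GRing.Theory Num.Theory.
Local Open Scope ring_scope.

(* Put w = N/z.  By the Chu-Vandermonde formula for rising factorials,
   (b + w - n)_n / (w - n)_n = sum_k C(n,k) (b)_k / (w - k)_k, while the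
   prefactor turns the n-th summand of the right-hand side into
   C(N,n) (a)_n (c-a)_(N-n) / (c)_N.  After exchanging the two sums, the
   sum over n is sum_n C(N,n) C(n,k) (a)_n (c-a)_(N-n) = C(N,k) (a)_k (c+k)_(N-k),
   again by Chu-Vandermonde, and (c+k)_(N-k) / (c)_N = 1 / (c)_k.  Since
   (N+1-k)_k = C(N,k) k!, this is the k-th term of the truncated series. *)

Lemma mul_bin_bin N k j : (k + j <= N)%N ->
  ('C(N, k + j) * 'C(k + j, k) = 'C(N, k) * 'C(N - k, j))%N.
Proof.
move=> le_kj_N; have le_k_N := leq_trans (leq_addr j k) le_kj_N.
have facts_gt0 : (0 < k`! * j`! * (N - k - j)`!)%N by rewrite !muln_gt0 !fact_gt0.
apply/eqP; rewrite -(eqn_pmul2r facts_gt0); apply/eqP; transitivity N`!.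
  by rewrite -(bin_fact le_kj_N) -(bin_fact (leq_addr j k)) addKn subnDA; ring.
rewrite -(bin_fact le_k_N) -(@bin_fact (N - k) j) ?leq_subRL //; ring.
Qed.

Lemma sum_bin_widen {R : pzSemiRingType} {n N} (F : nat -> R) : (n <= N)%N ->
  \sum_(k < n.+1) 'C(n, k)%:R * F k = \sum_(k < N.+1) 'C(n, k)%:R * F k.
Proof.
move=> le_nN; rewrite (big_ord_widen N.+1 (fun k => 'C(n, k)%:R * F k)) //.
rewrite big_mkcond /=; apply: eq_bigr => k _; case: ltnP => // lt_n_k.
by rewrite bin_small // mul0r.
Qed.

Section RisingFactorial.
Context {C : numClosedFieldType}.
Implicit Types a b c x y w z : C.

Lemma rfact0 x : rfact x 0 = 1.
Proof. by rewrite /rfact big_ord0. Qed.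

Lemma rfactS x k : rfact x k.+1 = rfact x k * (x + k%:R).
Proof. by rewrite /rfact big_ord_recr. Qed.

Lemma rfactD x m n : rfact x (m + n) = rfact x m * rfact (x + m%:R) n.
Proof.
elim: n => [|n IHn]; first by rewrite addn0 rfact0 mulr1.
by rewrite addnS !rfactS IHn mulrA natrD addrA.
Qed.

Lemma fact_neq0 n : (n`!%:R : C) != 0.
Proof. by rewrite pnatr_eq0 -lt0n fact_gt0. Qed.

Lemma bin_neq0 {N n} : (n <= N)%N -> ('C(N, n)%:R : C) != 0.
Proof. by rewrite pnatr_eq0 -lt0n bin_gt0. Qed.

Lemma rfact_natS n k : n`!%:R * rfact (n.+1%:R : C) k = (n + k)`!%:R.
Proof.
elim: k => [|k IHk]; first by rewrite rfact0 mulr1 addn0.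
by rewrite rfactS mulrA IHk addnS factS natrM mulrC -natrD addSn.
Qed.

Lemma rfact_bin N m : (m <= N)%N ->
  rfact ((N - m).+1%:R : C) m = 'C(N, m)%:R * m`!%:R.
Proof.
move=> le_mN; apply: (mulfI (fact_neq0 (N - m))).
by rewrite rfact_natS subnK // -(bin_fact le_mN) !natrM; ring.
Qed.

Lemma rfact_Vandermonde x y n :
  rfact (x + y) n = \sum_(k < n.+1) 'C(n, k)%:R * rfact x k * rfact y (n - k).
Proof.
elim: n => [|n IHn].
  by rewrite big_ord_recl big_ord0 !rfact0 addr0 bin0 !mulr1.
have split_factor (k : 'I_n.+1) :
    'C(n, k)%:R * rfact x k * rfact y (n - k) * (x + y + n%:R) =
    'C(n, k)%:R * rfact x k.+1 * rfact y (n - k) +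
    'C(n, k)%:R * rfact x k * rfact y (n - k).+1.
  have le_kn : (k <= n)%N by rewrite -ltnS.
  by rewrite !rfactS natrB //; ring.
rewrite rfactS IHn mulr_suml (eq_bigr _ (fun k _ => split_factor k)) big_split /=.
rewrite [RHS]big_ord_recl /= bin0 rfact0 mulr1 subn0.
under [in RHS]eq_bigr => k _ do rewrite binS natrD !mulrDl subSS.
rewrite big_split /= addrA addrC; congr (_ + _).
rewrite big_ord_recl [in RHS]big_ord_recr /= bin0 bin_small // !mul0r addr0 rfact0.
rewrite subn0 mulr1; congr (_ + _); apply: eq_bigr => k _.
by rewrite /bump /= add1n subnSK.
Qed.

Lemma rfact_ratio_Vandermonde x w n : rfact (w - n%:R) n != 0 ->
  rfact (x + w - n%:R) n / rfact (w - n%:R) n =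
  \sum_(k < n.+1) 'C(n, k)%:R * (rfact x k / rfact (w - k%:R) k).
Proof.
move=> rfact_neq0; rewrite -addrA (rfact_Vandermonde x) mulr_suml.
apply: eq_bigr => k _; have le_kn : (k <= n)%N by rewrite -ltnS.
have rfact_split : rfact (w - n%:R) n = rfact (w - n%:R) (n - k) * rfact (w - k%:R) k.
  by rewrite -{2}(subnK le_kn) rfactD natrB //; congr (_ * rfact _ _); ring.
move: rfact_neq0; rewrite rfact_split mulf_eq0 negb_or => /andP[? ?].
by field; apply/andP.
Qed.

Lemma sum_bin_bin_rfact x y N k : (k <= N)%N ->
  \sum_(n < N.+1) 'C(N, n)%:R * 'C(n, k)%:R * (rfact x n * rfact y (N - n)) =
  'C(N, k)%:R * rfact x k * rfact (x + y + k%:R) (N - k).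
Proof.
move=> le_kN; pose F n := 'C(N, n)%:R * 'C(n, k)%:R * (rfact x n * rfact y (N - n)).
rewrite -(big_mkord xpredT F) (big_cat_nat _ (n := k)) ?leqW //= big_nat_cond.
rewrite big1 ?add0r => [|n /andP[/andP[_ lt_nk] _]]; last first.
  by rewrite /F (bin_small lt_nk) mulr0 mul0r.
rewrite -{1}(add0n k) big_addn big_mkord subSn // addrAC rfact_Vandermonde.
rewrite mulr_sumr; apply: eq_bigr => j _; rewrite /F addnC.
have le_kj_N : (k + j <= N)%N by rewrite -leq_subRL // -ltnS.
by rewrite rfactD subnDA -!natrM mul_bin_bin // natrM; ring.
Qed.

Lemma F21trunc_bin N a b c z : F21trunc N a b c z =
  \sum_(k < N.+1) 'C(N, k)%:R * (rfact a k / rfact c k) *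
                   (rfact b k / rfact (N%:R / z - k%:R) k).
Proof.
rewrite /F21trunc; apply: eq_bigr => k _; have le_kN : (k <= N)%N by rewrite -ltnS.
rewrite subSn // rfact_bin // invfM.
have -> : forall x y u v f d, x * y * (u^-1 / f) * (v * f / d) =
    v * (x * u^-1) * (y / d) * (f^-1 * f) by move=> *; ring.
by rewrite mulVf ?fact_neq0 // mulr1.
Qed.

Lemma rfact_ratio_bin x y N n : (n <= N)%N ->
  rfact (x + n%:R) (N - n) != 0 -> rfact (y + (N - n)%:R) n != 0 ->
  rfact x N * rfact y N / N`!%:R *
  (rfact (1 + n%:R) (N - n) / rfact (x + n%:R) (N - n)) *
  (rfact (1 + (N - n)%:R) n / rfact (y + (N - n)%:R) n) =
  'C(N, n)%:R * (rfact x n * rfact y (N - n)).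
Proof.
move=> le_nN x_neq0 y_neq0; rewrite !nat1r -{1}(subKn le_nN) !rfact_bin ?leq_subr //.
rewrite bin_sub // -{1}(subnKC le_nN) -{2}(subnK le_nN) !rfactD.
rewrite -(bin_fact le_nN) !natrM.
move: (fact_neq0 n) (fact_neq0 (N - n)) (bin_neq0 le_nN) => ? ? ?.
by field; apply/and5P.
Qed.

End RisingFactorial.

Theorem theorem3p4 (C : numClosedFieldType) (N : nat) (a b c z : C)
  (hz : z != 0)
  (hc : forall m : nat, (m <= N)%N -> rfact c m != 0)
  (hzN : forall m : nat, (m <= N)%N -> rfact (N%:R / z - m%:R) m != 0)
  (ha : forall n : nat, (n <= N)%N -> rfact (a + n%:R) (N - n) != 0)
  (hca : forall n : nat, (n <= N)%N -> rfact (c - a + (N - n)%:R) n != 0) :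
  F21trunc N a b c z =
  (rfact a N * rfact (c - a) N) / (rfact c N * (N`!)%:R) *
  \sum_(n < N.+1)
    (rfact (1 + n%:R) (N - n) / rfact (a + n%:R) (N - n)) *
    (rfact (1 + (N - n)%:R) n / rfact (c - a + (N - n)%:R) n) *
    (rfact (b + N%:R / z - n%:R) n / rfact (N%:R / z - n%:R) n).
Proof.
set w := N%:R / z in hzN *.
have summandE (n : 'I_N.+1) :
    rfact a N * rfact (c - a) N / (rfact c N * N`!%:R) *
    (rfact (1 + n%:R) (N - n) / rfact (a + n%:R) (N - n) *
     (rfact (1 + (N - n)%:R) n / rfact (c - a + (N - n)%:R) n) *
     (rfact (b + w - n%:R) n / rfact (w - n%:R) n)) =
    \sum_(k < N.+1) 'C(N, n)%:R * 'C(n, k)%:R * (rfact a n * rfact (c - a) (N - n)) *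
                     (rfact b k / (rfact c N * rfact (w - k%:R) k)).
  have le_nN : (n <= N)%N by rewrite -ltnS.
  rewrite rfact_ratio_Vandermonde ?hzN //.
  rewrite (sum_bin_widen (fun k => rfact b k / rfact (w - k%:R) k) le_nN) !mulr_sumr.
  apply: eq_bigr => k _; have le_kN : (k <= N)%N by rewrite -ltnS.
  rewrite [_ * 'C(n, k)%:R * _]mulrAC -rfact_ratio_bin ?ha ?hca //.
  move: (hc N (leqnn N)) (hzN k le_kN) (ha n le_nN) (hca n le_nN) (@fact_neq0 C N).
  by move=> *; field; apply/and5P.
rewrite F21trunc_bin mulr_sumr (eq_bigr _ (fun n _ => summandE n)) exchange_big /=.
apply: eq_bigr => k _; have le_kN : (k <= N)%N by rewrite -ltnS.
rewrite -mulr_suml sum_bin_bin_rfact // subrKC.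
have c_split : rfact c N = rfact c k * rfact (c + k%:R) (N - k).
  by rewrite -rfactD subnKC.
move: (hc N (leqnn N)) (hzN k le_kN); rewrite c_split mulf_eq0 negb_or.
by move=> /andP[? ?] ?; field; apply/and3P.
Qed.
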